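(* Let $H_n=\sum_{j=1}^n\frac1j$, let $\gamma$ be the Euler–Mascheroni constant, $\Gamma$ the gamma function, and $z^{\overline{k}} = z(z+1) \cdots (z + k -1)$ the rising factorial. Then: (i) for $k \in \{1 ,2, \ldots\}$, $$\sum_{n=1}^\infty (-1)^n \left(H_n - \log\sqrt[k]{n^{\overline{k}}} - \gamma \right) = \frac{\gamma}{2} - \frac{\log(\pi)}{2k} + \frac{1}{k}\log\Gamma\left(\frac{k+1}{2}\right);$$ (ii) for $x > 0$, $$\sum_{n=1}^\infty (-1)^n \left(H_n - \log(n + x -1) - \gamma \right) = \frac{\gamma}{2} + \log\left[\frac{\Gamma\left(\frac{x + 1}{2}\right)}{\Gamma \left(\frac{x}{2}\right)} \right].$$ *)

From Stdlib Require Import Reals.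
From Coquelicot Require Import Coquelicot.
Open Scope R_scope.

Fixpoint harmonic (n : nat) : R :=
  match n with
  | O => 0
  | S m => harmonic m + / INR (S m)
  end.

Definition euler_gamma : R :=
  real (Lim_seq (fun n => harmonic n - ln (INR n))).

Definition Gamma (x : R) : R :=
  RInt_gen (fun t => Rpower t (x - 1) * exp (- t))
           (at_right 0) (Rbar_locally p_infty).

Fixpoint rising (z : R) (k : nat) : R :=
  match k with
  | O => 1
  | S m => rising z m * (z + INR m)
  end.

From Stdlib Require Import Reals Lra Lia Psatz Classical Factorial.
From Coquelicot Require Import Coquelicot.
Open Scope R_scope.

(* Write a_n(x) = H_n - ln(n + x - 1) - gamma.  Because Gamma(y + 1) = y Gamma(y), the sum of the
   first 2N terms of series (ii) telescopes to
     H_N / 2 - ln Gamma(N + (x+1)/2) + ln Gamma(N + x/2) + ln Gamma((x+1)/2) - ln Gamma(x/2).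
   Log-convexity of Gamma (Cauchy-Schwarz for its integral) gives Gamma(y + 1/2) ~ sqrt(y) Gamma(y),
   so these sums tend to gamma/2 + ln(Gamma((x+1)/2) / Gamma(x/2)); the odd partial sums follow
   because a_n(x) -> 0.
   Since ln(n^(k rising)) = sum_{j=1}^k ln(n + j - 1), series (i) is 1/k times the sum of the
   series (ii) for x = 1, ..., k, whose Gamma quotients telescope to
   ln Gamma((k+1)/2) - ln Gamma(1/2); finally Gamma(1/2)^2 = pi follows by comparing
   W_2n = (pi/2) Gamma(n + 1/2) / (Gamma(1/2) Gamma(n + 1)) with Wallis' product. *)

(** * Elementary inequalities, sequences and series *)

Lemma ln_le_sub_1 (x : R) : 0 < x -> ln x <= x - 1.
Proof.
  intros Hx; rewrite <- (ln_exp (x - 1)); apply ln_le; [exact Hx|].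
  pose proof (exp_ineq1_le (x - 1)); lra.
Qed.

Lemma ln_succ_sub_ln_bounds (y : R) : 0 < y -> / (y + 1) <= ln (y + 1) - ln y <= / y.
Proof.
  intros Hy; split.
  - pose proof (ln_le_sub_1 (y / (y + 1)) ltac:(apply Rdiv_lt_0_compat; lra)) as H.
    rewrite ln_div in H by lra.
    replace (y / (y + 1) - 1) with (- / (y + 1)) in H by (field; lra); lra.
  - pose proof (ln_le_sub_1 ((y + 1) / y) ltac:(apply Rdiv_lt_0_compat; lra)) as H.
    rewrite ln_div in H by lra.
    replace ((y + 1) / y - 1) with (/ y) in H by (field; lra); exact H.
Qed.

Lemma pow_le_fact_mul_exp (t : R) (n : nat) : 0 <= t -> t ^ n <= INR (fact n) * exp t.
Proof.
  intros Ht.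
  assert (Hfact : 0 < INR (fact n)) by apply INR_fact_lt_0.
  assert (term_le_sum : t ^ n / INR (fact n)
            <= sum_f_R0 (fun k => t ^ k / INR (fact k)) n).
  { destruct n as [|m]; [simpl; lra|].
    rewrite tech5.
    enough (0 <= sum_f_R0 (fun k => t ^ k / INR (fact k)) m) by lra.
    apply cond_pos_sum; intros k.
    apply Rmult_le_pos; [apply pow_le; lra | apply Rlt_le, Rinv_0_lt_compat, INR_fact_lt_0]. }
  pose proof (exp_ge_taylor t n Ht) as taylor.
  replace (t ^ n) with (INR (fact n) * (t ^ n / INR (fact n))) by (field; lra).
  apply Rmult_le_compat_l; lra.
Qed.

Lemma Rle_of_forall_INR_le (a b c : R) :
  (forall N, (1 <= N)%nat -> a * INR N <= b * INR N + c) -> a <= b.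
Proof.
  intros Hle; apply Rnot_lt_le; intros Hba.
  destruct (INR_unbounded (Rmax 1 (c / (a - b)))) as [N HN].
  assert (HN1 : 1 < INR N) by (eapply Rle_lt_trans; [apply Rmax_l | exact HN]).
  assert (Hc : c < (a - b) * INR N).
  { assert (c / (a - b) < INR N) by (eapply Rle_lt_trans; [apply Rmax_r | exact HN]).
    replace c with ((a - b) * (c / (a - b))) by (field; lra).
    apply Rmult_lt_compat_l; lra. }
  destruct N as [|N]; [simpl in HN1; lra|].
  specialize (Hle (S N) ltac:(lia)); lra.
Qed.

Lemma is_lim_seq_inv_INR_plus (a : R) : 0 < a -> is_lim_seq (fun n => / (INR n + a)) 0.
Proof.
  intros Ha.
  apply (is_lim_seq_inv _ p_infty); [| discriminate].
  eapply is_lim_seq_plus; [apply is_lim_seq_INR | apply is_lim_seq_const | reflexivity].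
Qed.

Lemma is_series_telescoping (T : nat -> R) (l : R) :
  is_lim_seq T l -> is_series (fun n => T (S n) - T n) (l - T O).
Proof.
  intros HT.
  assert (partial : forall n, T (S n) - T O = sum_n (fun k => T (S k) - T k) n).
  { induction n as [|n IH]; [rewrite sum_O; reflexivity|].
    rewrite sum_Sn, <- IH; unfold plus; simpl; ring. }
  change (is_lim_seq (sum_n (fun n => T (S n) - T n)) (l - T O)).
  apply (is_lim_seq_ext _ _ _ partial).
  apply is_lim_seq_minus'; [apply (is_lim_seq_incr_1 T), HT | apply is_lim_seq_const].
Qed.

Lemma is_series_of_paired (u : nat -> R) (l : R) :
  is_series (fun n => u (2 * n)%nat + u (S (2 * n))) l -> is_lim_seq u 0 -> is_series u l.
Proof.
  intros Hpairs Hu.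
  assert (odd_partial : forall n,
            sum_n (fun k => u (2 * k)%nat + u (S (2 * k))) n = sum_n u (S (2 * n))).
  { induction n as [|n IH]; [rewrite sum_Sn, !sum_O; reflexivity|].
    replace (S (2 * S n)) with (S (S (S (2 * n)))) by lia.
    rewrite sum_Sn, IH, (sum_Sn u (S (S (2 * n)))), (sum_Sn u (S (2 * n))).
    replace (2 * S n)%nat with (S (S (2 * n))) by lia.
    unfold plus; simpl; ring. }
  change (is_lim_seq (sum_n (fun n => u (2 * n)%nat + u (S (2 * n)))) l) in Hpairs.
  apply (is_lim_seq_ext _ _ _ odd_partial), is_lim_seq_spec in Hpairs.
  apply is_lim_seq_spec in Hu.
  change (is_lim_seq (sum_n u) l); apply is_lim_seq_spec; intros eps.
  assert (Heps2 : 0 < eps / 2) by (pose proof (cond_pos eps); lra).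
  destruct (Hpairs (mkposreal _ Heps2)) as [N1 H1], (Hu (mkposreal _ Heps2)) as [N2 H2].
  cbn [pos] in H1, H2.
  exists (S (2 * (N1 + N2))); intros n Hn.
  destruct (Nat.Even_or_Odd n) as [[k ->] | [k ->]].
  - destruct k as [|k]; [lia|].
    replace (2 * S k)%nat with (S (S (2 * k))) by lia.
    rewrite sum_Sn; change (Rabs (sum_n u (S (2 * k)) + u (S (S (2 * k))) - l) < eps).
    specialize (H1 k ltac:(lia)); specialize (H2 (S (S (2 * k))) ltac:(lia)).
    rewrite Rminus_0_r in H2.
    pose proof (Rabs_triang (sum_n u (S (2 * k)) - l) (u (S (S (2 * k))))).
    replace (sum_n u (S (2 * k)) + u (S (S (2 * k))) - l)
      with (sum_n u (S (2 * k)) - l + u (S (S (2 * k)))) by ring.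
    lra.
  - replace (2 * k + 1)%nat with (S (2 * k)) by lia.
    specialize (H1 k ltac:(lia)); lra.
Qed.

(** * Improper integrals over (0, +oo) *)

Section NonnegativeImproperIntegral.

Variable f : R -> R.
Hypothesis f_integrable : forall a b, 0 < a -> a <= b -> ex_RInt f a b.
Hypothesis f_ge0 : forall t, 0 < t -> 0 <= f t.

Lemma RInt_le_RInt_superinterval (a' a b b' : R) :
  0 < a' -> a' <= a -> a <= b -> b <= b' -> RInt f a b <= RInt f a' b'.
Proof.
  intros Ha' Ha'a Hab Hbb'.
  rewrite <- (RInt_Chasles (V:=R_CompleteNormedModule) f a' a b') by (apply f_integrable; lra).
  rewrite <- (RInt_Chasles (V:=R_CompleteNormedModule) f a b b') by (apply f_integrable; lra).
  assert (0 <= RInt f a' a).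
  { apply RInt_ge_0; [lra | apply f_integrable; lra | intros t Ht; apply f_ge0; lra]. }
  assert (0 <= RInt f b b').
  { apply RInt_ge_0; [lra | apply f_integrable; lra | intros t Ht; apply f_ge0; lra]. }
  unfold plus; simpl; lra.
Qed.

(* The improper integral is the supremum of the integrals over compact subintervals. *)
Lemma ex_RInt_gen_bounded (M : R) :
  (forall a b, 0 < a -> a <= b -> RInt f a b <= M) ->
  ex_RInt_gen f (at_right 0) (Rbar_locally p_infty).
Proof.
  intros HM.
  set (E := fun v => exists a b, 0 < a /\ a <= b /\ v = RInt f a b).
  assert (E_bound : bound E).
  { exists M; intros v (a & b & Ha & Hab & ->); auto. }
  assert (E_inhabited : exists v, E v).
  { exists (RInt f 1 1), 1, 1; repeat split; lra. }
  destruct (completeness E E_bound E_inhabited) as [L [L_ub L_least]].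
  exists L; intros P [eps HP].
  assert (L_approx : exists a0 b0, 0 < a0 /\ a0 <= b0 /\ L - eps < RInt f a0 b0).
  { apply NNPP; intros Hn.
    assert (L <= L - eps) by
      (apply L_least; intros v (a & b & Ha & Hab & ->);
       apply Rnot_lt_le; intros Hc; apply Hn; exists a, b; auto).
    destruct eps; simpl in *; lra. }
  destruct L_approx as (a0 & b0 & Ha0 & Hab0 & Hl0).
  apply (Filter_prod _ _ _ (fun a => 0 < a < a0) (fun b => b0 < b)).
  - exists (mkposreal a0 Ha0); intros a Ha Ha_pos.
    change (Rabs (a - 0) < a0) in Ha; apply Rabs_lt_between in Ha; lra.
  - exists b0; auto.
  - intros a b [Ha Haa0] Hb; simpl.
    exists (RInt f a b); split.
    + apply (RInt_correct (V:=R_CompleteNormedModule)), f_integrable; lra.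
    + apply HP; change (Rabs (RInt f a b - L) < eps); apply Rabs_lt_between.
      assert (RInt f a b <= L) by (apply L_ub; exists a, b; repeat split; lra).
      assert (RInt f a0 b0 <= RInt f a b) by (apply RInt_le_RInt_superinterval; lra).
      lra.
Qed.

Lemma RInt_le_is_RInt_gen (l a0 b0 : R) :
  is_RInt_gen f (at_right 0) (Rbar_locally p_infty) l ->
  0 < a0 -> a0 <= b0 -> RInt f a0 b0 <= l.
Proof.
  intros Hl Ha0 Hab0.
  apply Rnot_lt_le; intros Hlt.
  destruct (Hl (fun y => Rabs (y - l) < RInt f a0 b0 - l)) as [Q Q' [d Hd] [M HM] HQ].
  { assert (Heps : 0 < RInt f a0 b0 - l) by lra.
    exists (mkposreal _ Heps); auto. }
  set (a := Rmin (d / 2) a0).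
  set (b := Rmax (M + 1) b0).
  assert (Ha : 0 < a) by (apply Rmin_glb_lt; destruct d; simpl; lra).
  assert (Qa : Q a).
  { apply Hd; [| exact Ha].
    change (Rabs (a - 0) < d).
    assert (a <= d / 2) by apply Rmin_l; destruct d; simpl in *.
    rewrite Rabs_right; lra. }
  assert (Q'b : Q' b) by (apply HM; assert (M + 1 <= b) by apply Rmax_l; lra).
  destruct (HQ a b Qa Q'b) as [y [Hy Hyl]]; simpl in Hy.
  apply (is_RInt_unique (V:=R_CompleteNormedModule)) in Hy.
  assert (RInt f a0 b0 <= RInt f a b)
    by (apply RInt_le_RInt_superinterval; unfold a, b; auto using Rmin_r, Rmax_r; lra).
  rewrite Hy in *; apply Rabs_lt_between in Hyl; lra.
Qed.

Lemma is_RInt_gen_ge0 (l : R) :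
  is_RInt_gen f (at_right 0) (Rbar_locally p_infty) l -> 0 <= l.
Proof.
  intros Hl; replace 0 with (RInt f 1 1) by apply (RInt_point (V:=R_CompleteNormedModule)).
  apply RInt_le_is_RInt_gen; auto; lra.
Qed.

End NonnegativeImproperIntegral.

Lemma filter_prod_at_right_0_p_infty (P : R * R -> Prop) :
  (forall a b, 0 < a -> 0 < b -> P (a, b)) ->
  filter_prod (at_right 0) (Rbar_locally p_infty) P.
Proof.
  intros HP; apply (Filter_prod _ _ _ (fun a => 0 < a) (fun b => 0 < b)); auto.
  - exists (mkposreal 1 Rlt_0_1); auto.
  - exists 0; auto.
Qed.

Lemma is_RInt_gen_derive_pos (F f : R -> R) (la lb : R) :
  (forall t, 0 < t -> is_derive F t (f t)) ->
  (forall t, 0 < t -> continuous f t) ->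
  filterlim F (at_right 0) (locally la) ->
  filterlim F (Rbar_locally p_infty) (locally lb) ->
  is_RInt_gen f (at_right 0) (Rbar_locally p_infty) (lb - la).
Proof.
  intros HF Hf Hla Hlb.
  assert (in_domain : forall a b x, 0 < a -> 0 < b ->
            Rmin a b <= x <= Rmax a b -> 0 < x).
  { intros a b x Ha Hb Hx; apply Rlt_le_trans with (Rmin a b);
      [apply Rmin_glb_lt|]; lra. }
  apply (is_RInt_gen_ext (Derive F)).
  { apply filter_prod_at_right_0_p_infty; intros a b Ha Hb x Hx; simpl in Hx.
    apply is_derive_unique, HF, (in_domain a b); lra. }
  apply is_RInt_gen_Derive; auto;
    apply filter_prod_at_right_0_p_infty; intros a b Ha Hb x Hx; simpl in Hx;
    pose proof (in_domain a b x Ha Hb Hx) as Hx0.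
  - exists (f x); auto.
  - apply continuous_ext_loc with f; auto.
    assert (Hx2 : 0 < x / 2) by lra.
    exists (mkposreal _ Hx2); intros y Hy.
    change (Rabs (y - x) < x / 2) in Hy; apply Rabs_lt_between in Hy.
    symmetry; apply is_derive_unique, HF; lra.
Qed.

(** * The Gamma function *)

Definition gamma_integrand (s t : R) : R := Rpower t (s - 1) * exp (- t).

Lemma Gamma_RInt_gen (s : R) :
  Gamma s = RInt_gen (gamma_integrand s) (at_right 0) (Rbar_locally p_infty).
Proof. reflexivity. Qed.

Lemma gamma_integrand_gt0 (s t : R) : 0 < gamma_integrand s t.
Proof. apply Rmult_lt_0_compat; apply exp_pos. Qed.

Lemma continuous_gamma_integrand (s t : R) : 0 < t -> continuous (gamma_integrand s) t.
Proof.
  intros Ht; apply (ex_derive_continuous (V:=R_NormedModule)).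
  unfold gamma_integrand, Rpower; auto_derive; auto.
Qed.

Lemma ex_RInt_gamma_integrand (s a b : R) :
  0 < a -> a <= b -> ex_RInt (gamma_integrand s) a b.
Proof.
  intros Ha Hab; apply (ex_RInt_continuous (V:=R_CompleteNormedModule)).
  intros t Ht; rewrite Rmin_left in Ht by lra.
  apply continuous_gamma_integrand; lra.
Qed.

Lemma gamma_integrand_le_inv_sqr (s : R) :
  exists C, 0 < C /\ forall t, 1 <= t -> gamma_integrand s t <= C / t ^ 2.
Proof.
  (* t^(s+1) e^(-t) <= t^n e^(-t) <= n! for an integer n >= s + 1 *)
  destruct (INR_unbounded (s + 1)) as [n Hn].
  exists (INR (fact n)); split; [apply INR_fact_lt_0|]; intros t Ht.
  assert (ln_t_ge0 : 0 <= ln t) by (rewrite <- ln_1; apply ln_le; lra).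
  assert (t_sqr : t ^ 2 = exp (2 * ln t)).
  { rewrite <- (Rpower_pow 2 t) by lra; unfold Rpower; simpl; f_equal; ring. }
  assert (rpower_le_pow : exp ((s + 1) * ln t) <= t ^ n).
  { rewrite <- (Rpower_pow n t) by lra; unfold Rpower.
    destruct (Rle_lt_or_eq_dec _ _ ln_t_ge0) as [Hl|Hl].
    - apply Rlt_le, exp_increasing, Rmult_lt_compat_r; lra.
    - rewrite <- Hl, !Rmult_0_r; lra. }
  pose proof (pow_le_fact_mul_exp t n ltac:(lra)) as pow_le.
  assert (exp_inv : exp (- t) * exp t = 1) by (rewrite <- exp_plus, Rplus_opp_l; apply exp_0).
  assert (0 < exp (- t)) by apply exp_pos.
  apply Rmult_le_reg_r with (t ^ 2); [apply pow_lt; lra|].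
  unfold Rdiv; rewrite Rmult_assoc, Rinv_l, Rmult_1_r by (apply pow_nonzero; lra).
  unfold gamma_integrand, Rpower; rewrite t_sqr.
  replace (exp ((s - 1) * ln t) * exp (- t) * exp (2 * ln t))
    with (exp ((s + 1) * ln t) * exp (- t))
    by (replace ((s + 1) * ln t) with ((s - 1) * ln t + 2 * ln t) by ring;
        rewrite exp_plus; ring).
  apply Rle_trans with (t ^ n * exp (- t)); [apply Rmult_le_compat_r; lra|].
  replace (INR (fact n)) with (INR (fact n) * exp t * exp (- t))
    by (rewrite Rmult_assoc, (Rmult_comm (exp t)), exp_inv; ring).
  apply Rmult_le_compat_r; lra.
Qed.

Lemma RInt_gamma_integrand_0_1_le (s a : R) :
  0 < s -> 0 < a -> a <= 1 -> RInt (gamma_integrand s) a 1 <= / s.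
Proof.
  intros Hs Ha Ha1.
  set (p := fun t => exp ((s - 1) * ln t)).
  assert (p_cont : forall t, 0 < t -> continuous p t).
  { intros t Ht; apply (ex_derive_continuous (V:=R_NormedModule)).
    unfold p; auto_derive; lra. }
  assert (Hp : is_RInt p a 1 (minus (exp (s * ln 1) / s) (exp (s * ln a) / s))).
  { apply (is_RInt_derive (V:=R_CompleteNormedModule) (fun t => exp (s * ln t) / s));
      intros t Ht; rewrite Rmin_left, Rmax_right in Ht by lra; [|apply p_cont; lra].
    unfold p; auto_derive; [lra|].
    replace ((s - 1) * ln t) with (s * ln t + - ln t) by ring.
    rewrite exp_plus, exp_Ropp, exp_ln by lra; field; lra. }
  apply (is_RInt_unique (V:=R_CompleteNormedModule)) in Hp.
  apply Rle_trans with (RInt p a 1).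
  - apply RInt_le; auto; [apply ex_RInt_gamma_integrand; lra| |].
    + apply (ex_RInt_continuous (V:=R_CompleteNormedModule)).
      intros t Ht; rewrite Rmin_left, Rmax_right in Ht by lra; apply p_cont; lra.
    + intros t Ht; unfold gamma_integrand, Rpower; fold (p t).
      assert (0 < p t) by apply exp_pos.
      assert (exp (- t) <= 1) by (rewrite <- exp_0; apply Rlt_le, exp_increasing; lra).
      nra.
  - rewrite Hp; unfold minus, plus, opp; simpl; rewrite ln_1, Rmult_0_r, exp_0.
    assert (0 < exp (s * ln a) / s) by (apply Rdiv_lt_0_compat; [apply exp_pos | lra]).
    unfold Rdiv in *; lra.
Qed.

Lemma RInt_gamma_integrand_1_le (s : R) :
  exists M, forall b, 1 <= b -> RInt (gamma_integrand s) 1 b <= M.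
Proof.
  destruct (gamma_integrand_le_inv_sqr s) as [C [HC HgC]].
  exists C; intros b Hb.
  set (q := fun t => C / t ^ 2).
  assert (q_cont : forall t, 0 < t -> continuous q t).
  { intros t Ht; apply (ex_derive_continuous (V:=R_NormedModule)).
    unfold q; auto_derive; nra. }
  assert (Hq : is_RInt q 1 b (minus (- C / b) (- C / 1))).
  { apply (is_RInt_derive (V:=R_CompleteNormedModule) (fun t => - C / t));
      intros t Ht; rewrite Rmin_left, Rmax_right in Ht by lra; [|apply q_cont; lra].
    unfold q; auto_derive; [lra | field; lra]. }
  apply (is_RInt_unique (V:=R_CompleteNormedModule)) in Hq.
  apply Rle_trans with (RInt q 1 b).
  - apply RInt_le; auto; [apply ex_RInt_gamma_integrand; lra| |].
    + apply (ex_RInt_continuous (V:=R_CompleteNormedModule)).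
      intros t Ht; rewrite Rmin_left, Rmax_right in Ht by lra; apply q_cont; lra.
    + intros t Ht; apply HgC; lra.
  - rewrite Hq; unfold minus, plus, opp; simpl.
    assert (0 < C / b) by (apply Rdiv_lt_0_compat; lra).
    unfold Rdiv in *; lra.
Qed.

Lemma is_RInt_gen_Gamma (s : R) :
  0 < s -> is_RInt_gen (gamma_integrand s) (at_right 0) (Rbar_locally p_infty) (Gamma s).
Proof.
  intros Hs; apply (RInt_gen_correct (V:=R_CompleteNormedModule)).
  destruct (RInt_gamma_integrand_1_le s) as [M HM].
  apply (ex_RInt_gen_bounded _ (ex_RInt_gamma_integrand s)
           (fun t _ => Rlt_le _ _ (gamma_integrand_gt0 s t)) (/ s + M)).
  intros a b Ha Hab.
  assert (Ha1 : 0 < Rmin a 1) by (apply Rmin_glb_lt; lra).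
  apply Rle_trans with (RInt (gamma_integrand s) (Rmin a 1) (Rmax b 1)).
  - apply RInt_le_RInt_superinterval; auto using Rmin_l, Rmax_l.
    + apply ex_RInt_gamma_integrand.
    + intros t _; apply Rlt_le, gamma_integrand_gt0.
  - rewrite <- (RInt_Chasles (V:=R_CompleteNormedModule) _ _ 1 _)
      by (apply ex_RInt_gamma_integrand; auto using Rmin_r, Rmax_r; lra).
    apply Rplus_le_compat.
    + apply RInt_gamma_integrand_0_1_le; auto using Rmin_r.
    + apply HM, Rmax_r.
Qed.

Lemma Gamma_gt0 (s : R) : 0 < s -> 0 < Gamma s.
Proof.
  intros Hs.
  apply Rlt_le_trans with (RInt (gamma_integrand s) 1 2).
  - replace 0 with (RInt (fun _ => 0) 1 2)
      by (rewrite RInt_const; unfold scal; simpl; unfold mult; simpl; ring).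
    apply RInt_lt; [lra | intros; apply continuous_gamma_integrand; lra
                  | intros; apply continuous_const | intros; apply gamma_integrand_gt0].
  - apply (RInt_le_is_RInt_gen (gamma_integrand s)); try lra.
    + apply ex_RInt_gamma_integrand.
    + intros t _; apply Rlt_le, gamma_integrand_gt0.
    + apply is_RInt_gen_Gamma; lra.
Qed.

Lemma gamma_integrand_lim_p_infty (s : R) :
  filterlim (gamma_integrand s) (Rbar_locally p_infty) (locally 0).
Proof.
  destruct (gamma_integrand_le_inv_sqr s) as [C [HC HgC]].
  apply filterlim_locally; intros eps.
  exists (Rmax 1 (C / eps)); intros t Ht.
  assert (Ht1 : 1 < t) by (eapply Rle_lt_trans; [apply Rmax_l | exact Ht]).
  assert (HCt : C < eps * t).
  { assert (C / eps < t) by (eapply Rle_lt_trans; [apply Rmax_r | exact Ht]).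
    replace C with (eps * (C / eps)) by (field; apply Rgt_not_eq, cond_pos).
    apply Rmult_lt_compat_l; [apply cond_pos | lra]. }
  change (Rabs (gamma_integrand s t - 0) < eps).
  rewrite Rminus_0_r, Rabs_right by (apply Rle_ge, Rlt_le, gamma_integrand_gt0).
  apply Rle_lt_trans with (C / t ^ 2); [apply HgC; lra|].
  apply Rmult_lt_reg_r with (t ^ 2); [nra|].
  unfold Rdiv; rewrite Rmult_assoc, Rinv_l, Rmult_1_r by nra.
  pose proof (cond_pos eps); nra.
Qed.

Lemma gamma_integrand_succ_lim_0 (s : R) :
  0 < s -> filterlim (gamma_integrand (s + 1)) (at_right 0) (locally 0).
Proof.
  intros Hs; apply filterlim_locally; intros eps.
  exists (mkposreal _ (exp_pos (ln eps / s))); intros t Ht Ht0; simpl in Ht.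
  change (Rabs (t - 0) < exp (ln eps / s)) in Ht.
  rewrite Rminus_0_r, Rabs_right in Ht by lra.
  change (Rabs (gamma_integrand (s + 1) t - 0) < eps).
  rewrite Rminus_0_r, Rabs_right by (apply Rle_ge, Rlt_le, gamma_integrand_gt0).
  assert (Hln : s * ln t < ln eps).
  { apply ln_increasing in Ht; [|exact Ht0]; rewrite ln_exp in Ht.
    apply (Rmult_lt_compat_l s) in Ht; [|exact Hs].
    replace (s * (ln eps / s)) with (ln eps) in Ht by (field; lra); exact Ht. }
  unfold gamma_integrand, Rpower; replace (s + 1 - 1) with s by ring.
  assert (exp (s * ln t) < eps)
    by (rewrite <- (exp_ln eps) by apply cond_pos; apply exp_increasing, Hln).
  assert (exp (- t) < 1) by (rewrite <- exp_0; apply exp_increasing; lra).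
  pose proof (exp_pos (s * ln t)); nra.
Qed.

Lemma is_derive_gamma_integrand_succ (s t : R) : 0 < t ->
  is_derive (gamma_integrand (s + 1)) t (s * gamma_integrand s t - gamma_integrand (s + 1) t).
Proof.
  intros Ht; unfold gamma_integrand, Rpower; auto_derive; [lra|].
  replace (s + 1 - 1) with s by ring.
  replace ((s - 1) * ln t) with (s * ln t + - ln t) by ring.
  rewrite exp_plus, (exp_Ropp (ln t)), exp_ln by lra; field; lra.
Qed.

Lemma Gamma_succ (s : R) : 0 < s -> Gamma (s + 1) = s * Gamma s.
Proof.
  intros Hs.
  assert (by_parts : is_RInt_gen (fun t => s * gamma_integrand s t - gamma_integrand (s + 1) t)
                       (at_right 0) (Rbar_locally p_infty) (0 - 0)).
  { apply (is_RInt_gen_derive_pos (gamma_integrand (s + 1))).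
    - intros t Ht; apply is_derive_gamma_integrand_succ; exact Ht.
    - intros t Ht; apply (ex_derive_continuous (V:=R_NormedModule)).
      unfold gamma_integrand, Rpower; auto_derive; lra.
    - apply gamma_integrand_succ_lim_0; exact Hs.
    - apply gamma_integrand_lim_p_infty. }
  assert (linear : is_RInt_gen (fun t => s * gamma_integrand s t - gamma_integrand (s + 1) t)
                     (at_right 0) (Rbar_locally p_infty) (s * Gamma s - Gamma (s + 1)))
    by exact (is_RInt_gen_minus _ _ _ _ (is_RInt_gen_scal _ s _ (is_RInt_gen_Gamma s Hs))
                (is_RInt_gen_Gamma (s + 1) ltac:(lra))).
  apply (is_RInt_gen_unique (V:=R_CompleteNormedModule)) in by_parts, linear.
  rewrite by_parts in linear; lra.
Qed.

(* The integration by parts of Gamma_succ at s = 0, where gamma_integrand 1 t = exp (- t). *)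
Lemma Gamma_1 : Gamma 1 = 1.
Proof.
  assert (exp_neg : forall t, gamma_integrand 1 t = exp (- t)).
  { intros t; unfold gamma_integrand, Rpower; rewrite Rminus_diag, Rmult_0_l, exp_0; ring. }
  assert (by_parts : is_RInt_gen (fun t => 0 * gamma_integrand 0 t - gamma_integrand (0 + 1) t)
                       (at_right 0) (Rbar_locally p_infty) (0 - 1)).
  { apply (is_RInt_gen_derive_pos (gamma_integrand (0 + 1))).
    - intros t Ht; apply is_derive_gamma_integrand_succ; exact Ht.
    - intros t Ht; apply (ex_derive_continuous (V:=R_NormedModule)).
      unfold gamma_integrand, Rpower; auto_derive; lra.
    - rewrite Rplus_0_l.
      apply filterlim_ext with (f := fun t => exp (- t)); [intros t; symmetry; apply exp_neg|].
      replace 1 with (exp (- 0)) by (rewrite Ropp_0; apply exp_0).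
      apply (filterlim_filter_le_1 (F := locally 0)); [apply filter_le_within|].
      apply (ex_derive_continuous (V:=R_NormedModule) (fun t => exp (- t))); auto_derive; auto.
    - apply gamma_integrand_lim_p_infty. }
  apply is_RInt_gen_opp, (is_RInt_gen_ext _ (gamma_integrand 1)) in by_parts.
  2:{ apply filter_prod_at_right_0_p_infty; intros a b _ _ t _.
      unfold opp; simpl; rewrite Rplus_0_l; ring. }
  apply (is_RInt_gen_unique (V:=R_CompleteNormedModule)) in by_parts.
  rewrite Gamma_RInt_gen, by_parts; unfold opp; simpl; ring.
Qed.

(* Cauchy-Schwarz for the Gamma integral: the integrand
   t^(y-1) (1 + lam t^(1/2))^2 e^(-t) is nonnegative. *)
Lemma Gamma_quadratic_ge0 (y lam : R) : 0 < y ->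
  0 <= Gamma y + 2 * lam * Gamma (y + / 2) + lam ^ 2 * Gamma (y + 1).
Proof.
  intros Hy.
  assert (Hy1 : 0 < y + / 2) by lra.
  assert (Hy2 : 0 < y + 1) by lra.
  pose proof (is_RInt_gen_plus _ _ _ _
    (is_RInt_gen_plus _ _ _ _ (is_RInt_gen_Gamma y Hy)
       (is_RInt_gen_scal _ (2 * lam) _ (is_RInt_gen_Gamma (y + / 2) Hy1)))
    (is_RInt_gen_scal _ (lam ^ 2) _ (is_RInt_gen_Gamma (y + 1) Hy2))) as H.
  unfold plus, scal in H; simpl in H; unfold mult in H; simpl in H.
  refine (is_RInt_gen_ge0 _ _ _ _ H).
  - intros a b Ha Hab; apply (ex_RInt_continuous (V:=R_CompleteNormedModule)).
    intros z Hz; rewrite Rmin_left in Hz by lra.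
    apply (ex_derive_continuous (V:=R_NormedModule)).
    unfold gamma_integrand, Rpower; auto_derive; repeat split; lra.
  - intros t Ht; unfold gamma_integrand, Rpower.
    set (u := exp ((y - 1) / 2 * ln t)); set (v := exp (y / 2 * ln t)).
    assert (Eu : exp ((y - 1) * ln t) = u * u)
      by (unfold u; rewrite <- exp_plus; f_equal; field).
    assert (Ev : exp ((y + 1 - 1) * ln t) = v * v)
      by (unfold v; rewrite <- exp_plus; f_equal; field).
    assert (Euv : exp ((y + / 2 - 1) * ln t) = u * v)
      by (unfold u, v; rewrite <- exp_plus; f_equal; field).
    rewrite Eu, Ev, Euv.
    pose proof (exp_pos (- t)).
    apply Rle_trans with ((u + lam * v) ^ 2 * exp (- t));
      [apply Rmult_le_pos; [apply pow2_ge_0 | lra] | right; ring].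
Qed.

Lemma Gamma_half_shift_sqr_le (y : R) : 0 < y -> Gamma (y + / 2) ^ 2 <= y * Gamma y ^ 2.
Proof.
  intros Hy.
  pose proof (Gamma_gt0 y Hy) as HGy.
  pose proof (Gamma_gt0 (y + / 2) ltac:(lra)) as HGh.
  (* the minimizing choice lam = - Gamma (y + 1/2) / Gamma (y + 1) *)
  pose proof (Gamma_quadratic_ge0 y (- Gamma (y + / 2) / (y * Gamma y)) Hy) as Hq.
  rewrite Gamma_succ in Hq by exact Hy.
  set (Gy := Gamma y) in *; set (Gh := Gamma (y + / 2)) in *.
  replace (Gy + 2 * (- Gh / (y * Gy)) * Gh + (- Gh / (y * Gy)) ^ 2 * (y * Gy))
    with ((y * Gy ^ 2 - Gh ^ 2) / (y * Gy)) in Hq by (field; lra).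
  assert (0 < y * Gy) by nra.
  apply Rmult_le_compat_r with (r := y * Gy) in Hq; [|lra].
  unfold Rdiv in Hq; rewrite Rmult_0_l, Rmult_assoc, Rinv_l, Rmult_1_r in Hq by lra.
  lra.
Qed.

Definition log_Gamma_gap (y : R) : R := ln (Gamma (y + / 2)) - ln (Gamma y) - ln y / 2.

Lemma log_Gamma_gap_bounds (y : R) : 0 < y -> - / (4 * y) <= log_Gamma_gap y <= 0.
Proof.
  intros Hy.
  pose proof (Gamma_gt0 y Hy) as HG.
  pose proof (Gamma_gt0 (y + / 2) ltac:(lra)) as HH.
  pose proof (Gamma_half_shift_sqr_le y Hy) as upper.
  pose proof (Gamma_half_shift_sqr_le (y + / 2) ltac:(lra)) as lower.
  replace (y + / 2 + / 2) with (y + 1) in lower by field.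
  rewrite Gamma_succ in lower by exact Hy.
  apply ln_le in upper, lower; try (apply pow_lt; nra).
  rewrite ln_mult, !ln_pow in upper, lower by (try apply pow_lt; nra).
  rewrite ln_mult in lower by lra.
  pose proof (ln_le_sub_1 ((y + / 2) / y) ltac:(apply Rdiv_lt_0_compat; lra)) as ln_ratio.
  rewrite ln_div in ln_ratio by lra.
  replace ((y + / 2) / y - 1) with (/ (2 * y)) in ln_ratio by (field; lra).
  replace (/ (4 * y)) with (/ (2 * y) / 2) by (field; lra).
  unfold log_Gamma_gap; simpl INR in upper, lower; lra.
Qed.

Lemma is_lim_seq_log_Gamma_gap (a : R) :
  0 < a -> is_lim_seq (fun n => log_Gamma_gap (INR n + a)) 0.
Proof.
  intros Ha.
  assert (Hn : forall n, 0 < INR n + a) by (intros n; pose proof (pos_INR n); lra).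
  apply is_lim_seq_le_le with (u := fun n => - / 4 * / (INR n + a)) (w := fun _ => 0).
  - intros n; rewrite <- Ropp_mult_distr_l, <- Rinv_mult.
    apply log_Gamma_gap_bounds, Hn.
  - replace (Finite 0) with (Rbar_mult (- / 4) 0) by (simpl; f_equal; ring).
    apply is_lim_seq_scal_l, is_lim_seq_inv_INR_plus, Ha.
  - apply is_lim_seq_const.
Qed.

(** * Euler's constant *)

Lemma ln_succ_le_harmonic (n : nat) : ln (INR n + 1) <= harmonic n.
Proof.
  induction n as [|n IH].
  - simpl; rewrite Rplus_0_l, ln_1; lra.
  - change (harmonic (S n)) with (harmonic n + / INR (S n)); rewrite S_INR.
    pose proof (ln_succ_sub_ln_bounds (INR n + 1) ltac:(pose proof (pos_INR n); lra)).
    lra.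
Qed.

Lemma is_lim_seq_harmonic_sub_ln :
  is_lim_seq (fun n => harmonic n - ln (INR n)) euler_gamma.
Proof.
  set (d := fun n => harmonic (S n) - ln (INR (S n))).
  assert (d_decr : forall n, d (S n) <= d n).
  { intros n; unfold d; change (harmonic (S (S n))) with (harmonic (S n) + / INR (S (S n))).
    rewrite (S_INR (S n)).
    pose proof (ln_succ_sub_ln_bounds (INR (S n)) ltac:(apply lt_0_INR; lia)); lra. }
  assert (d_ge0 : forall n, 0 <= d n).
  { intros n; unfold d; rewrite S_INR.
    pose proof (ln_succ_le_harmonic (S n)) as H; rewrite S_INR in H.
    assert (ln (INR n + 1) <= ln (INR n + 1 + 1)) by (apply ln_le; pose proof (pos_INR n); lra).
    lra. }
  destruct (ex_finite_lim_seq_decr d 0 d_decr d_ge0) as [l Hl].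
  apply <- (is_lim_seq_incr_1 (fun n => harmonic n - ln (INR n))) in Hl.
  unfold euler_gamma; rewrite (is_lim_seq_unique _ _ Hl); exact Hl.
Qed.

Lemma is_lim_seq_harmonic_sub_ln_plus (c : R) :
  -1 < c -> is_lim_seq (fun n => harmonic n - ln (INR n + c)) euler_gamma.
Proof.
  intros Hc.
  assert (ln_ratio : is_lim_seq (fun n => ln (1 + c * / (INR n + 1))) 0).
  { rewrite <- ln_1; apply (is_lim_seq_continuous ln).
    - apply derivable_continuous_pt; exists (/ 1); apply derivable_pt_lim_ln; lra.
    - pose proof (is_lim_seq_plus' _ _ _ _ (is_lim_seq_const 1)
        (is_lim_seq_mult' _ _ _ _ (is_lim_seq_const c) (is_lim_seq_inv_INR_plus 1 Rlt_0_1))) as H.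
      rewrite Rmult_0_r, Rplus_0_r in H; exact H. }
  apply is_lim_seq_incr_1.
  replace euler_gamma with (euler_gamma - 0) by ring.
  apply (is_lim_seq_ext (fun n => (harmonic (S n) - ln (INR (S n)))
                                  - ln (1 + c * / (INR n + 1)))).
  - intros n; rewrite <- S_INR.
    assert (0 < INR (S n)) by (apply lt_0_INR; lia).
    assert (0 < INR (S n) + c) by (rewrite S_INR; pose proof (pos_INR n); lra).
    replace (1 + c * / INR (S n)) with ((INR (S n) + c) / INR (S n)) by (field; lra).
    rewrite ln_div by lra; ring.
  - apply is_lim_seq_minus'; [|exact ln_ratio].
    apply (is_lim_seq_incr_1 (fun n => harmonic n - ln (INR n))), is_lim_seq_harmonic_sub_ln.
Qed.

(** * Series (ii) *)

Definition euler_defect (x : R) (n : nat) : R := harmonic n - ln (INR n + x - 1) - euler_gamma.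

Definition even_partial_sum (x : R) (N : nat) : R :=
  harmonic N / 2 - ln (Gamma (INR N + (x + 1) / 2)) + ln (Gamma (INR N + x / 2))
  + ln (Gamma ((x + 1) / 2)) - ln (Gamma (x / 2)).

Section SeriesII.

Variable x : R.
Hypothesis x_gt0 : 0 < x.

Lemma even_partial_sum_0 : even_partial_sum x 0 = 0.
Proof. unfold even_partial_sum; simpl; rewrite !Rplus_0_l; lra. Qed.

Lemma even_partial_sum_succ (N : nat) :
  even_partial_sum x (S N) - even_partial_sum x N
  = euler_defect x (S (S (2 * N))) - euler_defect x (S (2 * N)).
Proof.
  assert (HN : 0 <= INR N) by apply pos_INR.
  set (y := INR N + x / 2).
  assert (Hy : 0 < y) by (unfold y; lra).
  assert (H_even : INR (S (S (2 * N))) + x - 1 = 2 * (y + / 2))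
    by (unfold y; rewrite !S_INR, mult_INR; simpl; field).
  assert (H_odd : INR (S (2 * N)) + x - 1 = 2 * y)
    by (unfold y; rewrite S_INR, mult_INR; simpl; field).
  unfold even_partial_sum, euler_defect; rewrite H_even, H_odd.
  change (harmonic (S (S (2 * N)))) with (harmonic (S (2 * N)) + / INR (S (S (2 * N)))).
  change (harmonic (S N)) with (harmonic N + / INR (S N)).
  replace (INR (S (S (2 * N)))) with (2 * (INR N + 1))
    by (rewrite !S_INR, mult_INR; simpl; ring).
  replace (INR N + (x + 1) / 2) with (y + / 2) by (unfold y; field).
  replace (INR (S N) + (x + 1) / 2) with (y + / 2 + 1) by (unfold y; rewrite S_INR; field).
  replace (INR (S N) + x / 2) with (y + 1) by (unfold y; rewrite S_INR; ring).
  rewrite S_INR, !Gamma_succ by lra.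
  pose proof (Gamma_gt0 y Hy); pose proof (Gamma_gt0 (y + / 2) ltac:(lra)).
  rewrite !ln_mult by lra.
  fold y; field; lra.
Qed.

Lemma is_lim_seq_even_partial_sum :
  is_lim_seq (even_partial_sum x)
    (euler_gamma / 2 + ln (Gamma ((x + 1) / 2)) - ln (Gamma (x / 2))).
Proof.
  apply (is_lim_seq_ext (fun N => (harmonic N - ln (INR N + x / 2)) / 2
                                  - log_Gamma_gap (INR N + x / 2)
                                  + (ln (Gamma ((x + 1) / 2)) - ln (Gamma (x / 2))))).
  - intros N; unfold even_partial_sum, log_Gamma_gap.
    replace (INR N + (x + 1) / 2) with (INR N + x / 2 + / 2) by field; lra.
  - replace (euler_gamma / 2 + ln (Gamma ((x + 1) / 2)) - ln (Gamma (x / 2)))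
      with (euler_gamma / 2 - 0 + (ln (Gamma ((x + 1) / 2)) - ln (Gamma (x / 2)))) by ring.
    apply is_lim_seq_plus'; [apply is_lim_seq_minus'|apply is_lim_seq_const].
    + apply is_lim_seq_scal_r with (a := / 2) (lu := Finite euler_gamma),
        is_lim_seq_harmonic_sub_ln_plus; lra.
    + apply is_lim_seq_log_Gamma_gap; lra.
Qed.

Lemma is_lim_seq_euler_defect : is_lim_seq (euler_defect x) 0.
Proof.
  replace (Finite 0) with (Finite (euler_gamma - euler_gamma)) by (f_equal; ring).
  apply (is_lim_seq_ext (fun n => (harmonic n - ln (INR n + (x - 1))) - euler_gamma)).
  - intros n; unfold euler_defect; f_equal; f_equal; f_equal; ring.
  - apply is_lim_seq_minus'; [|apply is_lim_seq_const].
    apply is_lim_seq_harmonic_sub_ln_plus; lra.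
Qed.

Lemma is_series_alt_euler_defect :
  is_series (fun m => (-1) ^ S m * euler_defect x (S m))
    (euler_gamma / 2 + ln (Gamma ((x + 1) / 2)) - ln (Gamma (x / 2))).
Proof.
  apply is_series_of_paired.
  - assert (pair_eq : forall N, even_partial_sum x (S N) - even_partial_sum x N
              = (-1) ^ S (2 * N) * euler_defect x (S (2 * N))
                + (-1) ^ S (S (2 * N)) * euler_defect x (S (S (2 * N)))).
    { intros N; rewrite even_partial_sum_succ, pow_1_odd.
      replace (S (S (2 * N))) with (2 * S N)%nat by lia; rewrite pow_1_even; ring. }
    apply (is_series_ext _ _ _ pair_eq).
    replace (euler_gamma / 2 + ln (Gamma ((x + 1) / 2)) - ln (Gamma (x / 2)))
      with (euler_gamma / 2 + ln (Gamma ((x + 1) / 2)) - ln (Gamma (x / 2))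
            - even_partial_sum x 0) by (rewrite even_partial_sum_0; ring).
    apply is_series_telescoping, is_lim_seq_even_partial_sum.
  - apply is_lim_seq_abs_0.
    apply (is_lim_seq_ext (fun m => Rabs (euler_defect x (S m)))).
    + intros m; rewrite Rabs_mult, pow_1_abs; ring.
    + apply -> is_lim_seq_abs_0.
      apply (is_lim_seq_incr_1 (euler_defect x)), is_lim_seq_euler_defect.
Qed.

End SeriesII.

(** * Wallis' integrals and Gamma(1/2) *)

Definition wallis (n : nat) : R := RInt (fun t => sin t ^ n) 0 (PI / 2).

Lemma continuous_sin_pow (n : nat) (t : R) : continuous (fun t => sin t ^ n) t.
Proof. apply (ex_derive_continuous (V:=R_NormedModule)); auto_derive; auto. Qed.

Lemma is_RInt_wallis (n : nat) : is_RInt (fun t => sin t ^ n) 0 (PI / 2) (wallis n).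
Proof.
  apply (RInt_correct (V:=R_CompleteNormedModule)).
  apply (ex_RInt_continuous (V:=R_CompleteNormedModule)); intros; apply continuous_sin_pow.
Qed.

(* Integration by parts, with (cos t * sin t ^ (n+1))' = (n+1) sin t ^ n - (n+2) sin t ^ (n+2). *)
Lemma wallis_rec (n : nat) : INR (S (S n)) * wallis (S (S n)) = INR (S n) * wallis n.
Proof.
  set (df := fun t => INR (S n) * sin t ^ n - INR (S (S n)) * sin t ^ S (S n)).
  assert (linear : is_RInt df 0 (PI / 2)
                     (INR (S n) * wallis n - INR (S (S n)) * wallis (S (S n))))
    by exact (is_RInt_minus (V:=R_NormedModule) _ _ _ _ _ _
                (is_RInt_scal (V:=R_NormedModule) _ _ _ _ _ (is_RInt_wallis n))
                (is_RInt_scal (V:=R_NormedModule) _ _ _ _ _ (is_RInt_wallis (S (S n))))).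
  assert (by_parts : is_RInt df 0 (PI / 2)
            (minus (cos (PI / 2) * sin (PI / 2) ^ S n) (cos 0 * sin 0 ^ S n))).
  { apply (is_RInt_derive (V:=R_CompleteNormedModule) (fun t => cos t * sin t ^ S n));
      intros t _.
    - unfold df; auto_derive; auto; cbn [Init.Nat.pred].
      change (match n with 0%nat => 1 | S _ => INR n + 1 end) with (INR (S n)).
      pose proof (sin2_cos2 t) as Hsc; unfold Rsqr in Hsc.
      replace (sin t ^ S (S n)) with (sin t * sin t * sin t ^ n) by (simpl; ring).
      replace (cos t * (1 * cos t * (INR (S n) * sin t ^ n)))
        with ((cos t * cos t) * (INR (S n) * sin t ^ n)) by ring.
      replace (cos t * cos t) with (1 - sin t * sin t) by lra.
      rewrite !S_INR; ring.
    - apply (ex_derive_continuous (V:=R_NormedModule)); unfold df; auto_derive; auto. }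
  replace (minus (cos (PI / 2) * sin (PI / 2) ^ S n) (cos 0 * sin 0 ^ S n)) with 0
    in by_parts by (rewrite cos_PI2, sin_0; unfold minus, plus, opp; simpl; ring).
  apply (is_RInt_unique (V:=R_CompleteNormedModule)) in linear, by_parts.
  rewrite linear in by_parts; lra.
Qed.

Lemma wallis_0 : wallis 0 = PI / 2.
Proof.
  unfold wallis; simpl; rewrite (RInt_const (V:=R_CompleteNormedModule)).
  unfold scal; simpl; unfold mult; simpl; ring.
Qed.

Lemma wallis_1 : wallis 1 = 1.
Proof.
  assert (H : is_RInt (fun t => sin t ^ 1) 0 (PI / 2) (minus (- cos (PI / 2)) (- cos 0))).
  { apply (is_RInt_derive (V:=R_CompleteNormedModule) (fun t => - cos t)); intros t _.
    - auto_derive; auto; ring.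
    - apply continuous_sin_pow. }
  apply (is_RInt_unique (V:=R_CompleteNormedModule)) in H; unfold wallis; rewrite H.
  rewrite cos_PI2, cos_0; unfold minus, plus, opp; simpl; ring.
Qed.

Lemma wallis_ge0_le (n : nat) : 0 <= wallis (S n) <= wallis n.
Proof.
  pose proof PI_RGT_0.
  assert (sin_bounds : forall t, 0 <= t <= PI / 2 -> 0 <= sin t <= 1).
  { intros t Ht; split; [apply sin_ge_0; lra | apply SIN_bound]. }
  unfold wallis; split.
  - apply RInt_ge_0; [lra | apply (ex_RInt_continuous (V:=R_CompleteNormedModule));
                            intros; apply continuous_sin_pow |].
    intros t Ht; apply pow_le, sin_bounds; lra.
  - apply RInt_le; [lra | apply (ex_RInt_continuous (V:=R_CompleteNormedModule));
                          intros; apply continuous_sin_pow ..|].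
    intros t Ht; destruct (sin_bounds t ltac:(lra)).
    pose proof (pow_le (sin t) n ltac:(lra)); simpl; nra.
Qed.

Lemma wallis_prod (n : nat) : INR (S n) * wallis n * wallis (S n) = PI / 2.
Proof.
  induction n as [|n IH].
  - rewrite wallis_0, wallis_1; simpl; field.
  - rewrite <- IH, <- (wallis_rec n); ring.
Qed.

Lemma wallis_gt0 (n : nat) : 0 < wallis n.
Proof.
  destruct (wallis_ge0_le n) as [Hn1 Hn]; pose proof (wallis_prod n) as Hprod.
  destruct (Rle_lt_or_eq_dec 0 (wallis n)) as [Hpos | Hz]; [lra | exact Hpos |].
  rewrite <- Hz in Hprod; pose proof PI_RGT_0; lra.
Qed.

Lemma wallis_even_Gamma (N : nat) :
  wallis (2 * N) * Gamma (/ 2) * Gamma (INR N + 1) = PI / 2 * Gamma (INR N + / 2).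
Proof.
  induction N as [|N IH].
  - simpl; rewrite wallis_0, !Rplus_0_l, Gamma_1; ring.
  - pose proof (wallis_rec (2 * N)) as Hrec; pose proof (pos_INR N).
    replace (2 * S N)%nat with (S (S (2 * N))) by lia.
    replace (INR (S (S (2 * N)))) with (2 * INR N + 2) in Hrec
      by (rewrite !S_INR, mult_INR; simpl; ring).
    replace (INR (S (2 * N))) with (2 * INR N + 1) in Hrec
      by (rewrite S_INR, mult_INR; simpl; ring).
    rewrite S_INR, (Gamma_succ (INR N + 1)) by lra.
    replace (INR N + 1 + / 2) with (INR N + / 2 + 1) by ring.
    rewrite (Gamma_succ (INR N + / 2)) by lra.
    replace (wallis (S (S (2 * N)))) with ((2 * INR N + 1) / (2 * INR N + 2) * wallis (2 * N))
      by (apply Rmult_eq_reg_l with (2 * INR N + 2); [rewrite Hrec; field|]; lra).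
    transitivity ((INR N + / 2) * (wallis (2 * N) * Gamma (/ 2) * Gamma (INR N + 1)));
      [field | rewrite IH; ring]; lra.
Qed.

(* Squeeze W(2n)^2 between W(2n) W(2n+1) and W(2n-1) W(2n), which wallis_prod evaluates, and
   compare with n Gamma(n + 1/2)^2 <= Gamma(n + 1)^2 <= (n + 1/2) Gamma(n + 1/2)^2. *)
Lemma Gamma_half_sqr_bounds (N : nat) : (1 <= N)%nat ->
  PI * INR N <= Gamma (/ 2) ^ 2 * (INR N + / 2)
  /\ Gamma (/ 2) ^ 2 * INR N <= PI * (INR N + / 2).
Proof.
  intros HN; destruct N as [|K]; [lia|].
  set (n := INR (S K)).
  assert (Hn : 1 <= n) by (unfold n; rewrite S_INR; pose proof (pos_INR K); lra).
  pose proof (wallis_even_Gamma (S K)) as E; fold n in E.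
  replace (2 * S K)%nat with (S (S (2 * K))) in E by lia.
  pose proof (wallis_prod (S (2 * K))) as P_below.
  pose proof (wallis_prod (S (S (2 * K)))) as P_above.
  replace (INR (S (S (2 * K)))) with (2 * n) in P_below
    by (unfold n; rewrite !S_INR, mult_INR; simpl; ring).
  replace (INR (S (S (S (2 * K))))) with (2 * n + 1) in P_above
    by (unfold n; rewrite !S_INR, mult_INR; simpl; ring).
  destruct (wallis_ge0_le (S (2 * K))) as [_ D_below].
  destruct (wallis_ge0_le (S (S (2 * K)))) as [_ D_above].
  pose proof (wallis_gt0 (S (2 * K))); pose proof (wallis_gt0 (S (S (2 * K)))).
  pose proof (wallis_gt0 (S (S (S (2 * K))))).
  set (Wm := wallis (S (2 * K))) in *; set (W := wallis (S (S (2 * K)))) in *.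
  set (Wp := wallis (S (S (S (2 * K))))) in *.
  pose proof (Gamma_half_shift_sqr_le n ltac:(lra)) as G_low.
  pose proof (Gamma_half_shift_sqr_le (n + / 2) ltac:(lra)) as G_high.
  replace (n + / 2 + / 2) with (n + 1) in G_high by field.
  pose proof (Gamma_succ n ltac:(lra)) as Gn1.
  pose proof (Gamma_gt0 n ltac:(lra)); pose proof (Gamma_gt0 (n + / 2) ltac:(lra)).
  pose proof PI_RGT_0.
  set (c := Gamma (/ 2) ^ 2).
  set (A := Gamma (n + / 2)) in *; set (B := Gamma (n + 1)) in *.
  assert (G_low' : n * A ^ 2 <= B ^ 2) by (rewrite Gn1; nra).
  assert (sq : c * B ^ 2 * W ^ 2 = (PI / 2) ^ 2 * A ^ 2).
  { replace ((PI / 2) ^ 2 * A ^ 2) with ((PI / 2 * A) ^ 2) by ring.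
    rewrite <- E; unfold c; ring. }
  assert (HA : 0 < A ^ 2) by (apply pow_lt; lra).
  assert (Hc : 0 <= c) by (unfold c; apply pow2_ge_0).
  assert (W_sqr_le : 4 * n * W ^ 2 <= PI) by nra.
  assert (W_sqr_ge : PI <= 2 * (2 * n + 1) * W ^ 2) by nra.
  split.
  - assert (PI * n * A ^ 2 <= c * B ^ 2).
    { apply Rmult_le_reg_l with PI; [lra|].
      apply Rle_trans with (c * B ^ 2 * (4 * n * W ^ 2)).
      + right; replace (c * B ^ 2 * (4 * n * W ^ 2)) with (4 * n * (c * B ^ 2 * W ^ 2)) by ring.
        rewrite sq; field.
      + replace (PI * (c * B ^ 2)) with (c * B ^ 2 * PI) by ring.
        apply Rmult_le_compat_l; [nra | exact W_sqr_le]. }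
    nra.
  - assert (c * B ^ 2 <= PI * (n + / 2) * A ^ 2).
    { apply Rmult_le_reg_l with PI; [lra|].
      apply Rle_trans with (c * B ^ 2 * (2 * (2 * n + 1) * W ^ 2)).
      + replace (PI * (c * B ^ 2)) with (c * B ^ 2 * PI) by ring.
        apply Rmult_le_compat_l; [nra | exact W_sqr_ge].
      + right; replace (c * B ^ 2 * (2 * (2 * n + 1) * W ^ 2))
                 with (2 * (2 * n + 1) * (c * B ^ 2 * W ^ 2)) by ring.
        rewrite sq; field. }
    nra.
Qed.

Lemma Gamma_half_sqr : Gamma (/ 2) ^ 2 = PI.
Proof.
  apply Rle_antisym.
  - apply (Rle_of_forall_INR_le _ _ (PI / 2)); intros N HN.
    destruct (Gamma_half_sqr_bounds N HN); lra.
  - apply (Rle_of_forall_INR_le _ _ (Gamma (/ 2) ^ 2 / 2)); intros N HN.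
    destruct (Gamma_half_sqr_bounds N HN); lra.
Qed.

Lemma ln_Gamma_half : ln (Gamma (/ 2)) = ln PI / 2.
Proof.
  pose proof (Gamma_gt0 (/ 2) ltac:(lra)) as HG.
  rewrite <- Gamma_half_sqr, ln_pow by exact HG; simpl; field.
Qed.

(** * Series (i) *)

Lemma rising_gt0 (z : R) (k : nat) : 0 < z -> 0 < rising z k.
Proof.
  intros Hz; induction k as [|k IH]; simpl; [lra|].
  apply Rmult_lt_0_compat; [exact IH | pose proof (pos_INR k); lra].
Qed.

Lemma is_series_alt_log_rising (k : nat) :
  is_series (fun m => (-1) ^ S m * (INR k * (harmonic (S m) - euler_gamma)
                                   - ln (rising (INR (S m)) k)))
    (INR k * euler_gamma / 2 + ln (Gamma ((INR k + 1) / 2)) - ln (Gamma (/ 2))).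
Proof.
  induction k as [|k IH].
  - change (INR 0) with 0; cbn [rising]; rewrite ln_1.
    replace (0 * euler_gamma / 2 + ln (Gamma ((0 + 1) / 2)) - ln (Gamma (/ 2)))
      with 0 by (replace ((0 + 1) / 2) with (/ 2) by field; lra).
    apply (is_series_ext (fun _ => 0));
      [intros m; rewrite Rmult_0_l, Rminus_0_r, Rmult_0_r; reflexivity|].
    apply filterlim_ext with (f := fun _ => 0);
      [intros n; rewrite sum_n_const, Rmult_0_r; reflexivity | apply filterlim_const].
  - assert (Hk : 0 < INR (S k)) by (apply lt_0_INR; lia).
    assert (term : forall m,
      (-1) ^ S m * (INR k * (harmonic (S m) - euler_gamma) - ln (rising (INR (S m)) k))
      + (-1) ^ S m * euler_defect (INR (S k)) (S m)
      = (-1) ^ S m * (INR (S k) * (harmonic (S m) - euler_gamma)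
                      - ln (rising (INR (S m)) (S k)))).
    { intros m; assert (Hm : 0 < INR (S m)) by (apply lt_0_INR; lia).
      unfold euler_defect; cbn [rising].
      rewrite ln_mult by (try apply rising_gt0; pose proof (pos_INR k); lra).
      replace (INR (S m) + INR (S k) - 1) with (INR (S m) + INR k) by (rewrite (S_INR k); ring).
      rewrite (S_INR k); ring. }
    apply (is_series_ext _ _ _ term).
    replace (INR (S k) * euler_gamma / 2 + ln (Gamma ((INR (S k) + 1) / 2)) - ln (Gamma (/ 2)))
      with ((INR k * euler_gamma / 2 + ln (Gamma ((INR k + 1) / 2)) - ln (Gamma (/ 2)))
            + (euler_gamma / 2 + ln (Gamma ((INR (S k) + 1) / 2)) - ln (Gamma (INR (S k) / 2))))
      by (replace (INR (S k) / 2) with ((INR k + 1) / 2) by (rewrite S_INR; field);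
          rewrite S_INR; field).
    exact (is_series_plus _ _ _ _ IH (is_series_alt_euler_defect (INR (S k)) Hk)).
Qed.

Theorem mainTheorem11 :
  (forall k : nat, (1 <= k)%nat ->
     is_series
       (fun m : nat =>
          (-1) ^ (S m) *
          (harmonic (S m) - ln (rising (INR (S m)) k) / INR k - euler_gamma))
       (euler_gamma / 2 - ln PI / (2 * INR k)
        + / INR k * ln (Gamma ((INR k + 1) / 2))))
  /\
  (forall x : R, 0 < x ->
     is_series
       (fun m : nat =>
          (-1) ^ (S m) *
          (harmonic (S m) - ln (INR (S m) + x - 1) - euler_gamma))
       (euler_gamma / 2 + ln (Gamma ((x + 1) / 2) / Gamma (x / 2)))).
Proof.
  split.
  - intros k Hk.
    assert (HK : 0 < INR k) by (apply lt_0_INR; lia).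
    assert (term : forall m,
      / INR k * ((-1) ^ S m * (INR k * (harmonic (S m) - euler_gamma)
                               - ln (rising (INR (S m)) k)))
      = (-1) ^ S m * (harmonic (S m) - ln (rising (INR (S m)) k) / INR k - euler_gamma))
      by (intros m; field; lra).
    apply (is_series_ext _ _ _ term).
    replace (euler_gamma / 2 - ln PI / (2 * INR k) + / INR k * ln (Gamma ((INR k + 1) / 2)))
      with (/ INR k * (INR k * euler_gamma / 2 + ln (Gamma ((INR k + 1) / 2))
                       - ln (Gamma (/ 2))))
      by (rewrite ln_Gamma_half; field; lra).
    exact (is_series_scal _ _ _ (is_series_alt_log_rising k)).
  - intros x Hx.
    rewrite ln_div by (apply Gamma_gt0; lra).
    replace (euler_gamma / 2 + (ln (Gamma ((x + 1) / 2)) - ln (Gamma (x / 2))))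
      with (euler_gamma / 2 + ln (Gamma ((x + 1) / 2)) - ln (Gamma (x / 2))) by ring.
    exact (is_series_alt_euler_defect x Hx).
Qed.
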